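(* Let $L>1$ and let $\mathbf{r}:[0,L]\to\mathbb{R}^2$, $\mathbf{r}(s)=[x(s),y(s)]^T$, be a smooth curve parametrized by arclength $s$ (so $|\dot{\mathbf r}(s)|=1$, where $\dot{()}=d/ds$), with $\mathbf{r}(0)=[0,0]^T$ and $\mathbf{r}(L)=[1,0]^T$. If there is no $s^\star\in[0,L]$ with $\dot{\mathbf{r}}(s^\star)=[1,0]^T$, then $\mathbf{r}$ is self-intersecting. *)

From Stdlib Require Import Reals.
From Coquelicot Require Import Coquelicot.
Open Scope R_scope.

Definition smooth (f : R -> R) : Prop :=
  forall (n : nat) (t : R), ex_derive_n f n t.

(* Among the pairs [u < v] with [y u = y v] and [x u <= x v] (chords of the
   curve pointing weakly east; [(0, L)] is one), pick a shortest one nested in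
   [(0, L)].  Such pairs cannot be arbitrarily short: by Rolle, [y'] vanishes
   between [u] and [v], where the tangent must then point west, and by uniform
   continuity of [x'] the curve keeps moving west on a short interval.  On a
   shortest chord, every strictly shorter horizontal sub-chord points west;
   shrinking towards the endpoints then forces [x v <= x u], so
   [r u = r v] is a self-intersection. *)
From Stdlib Require Import Reals Lra Lia Classical ClassicalEpsilon.
From Coquelicot Require Import Coquelicot.
Open Scope R_scope.

Lemma ex_derive_continuity_pt f t : ex_derive f t -> continuity_pt f t.
Proof. intros Hf; apply continuity_pt_filterlim; exact (ex_derive_continuous f t Hf). Qed.

Lemma smooth_ex_derive f : smooth f -> forall t, ex_derive f t.
Proof. intros Hf t; exact (Hf 1%nat t). Qed.

Lemma smooth_Derive_continuity_pt f : smooth f -> forall t, continuity_pt (Derive f) t.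
Proof. intros Hf t; apply ex_derive_continuity_pt; exact (Hf 2%nat t). Qed.

Lemma continuity_pt_near f a eps : continuity_pt f a -> 0 < eps ->
  exists d, 0 < d /\ forall b, Rabs (b - a) < d -> Rabs (f b - f a) < eps.
Proof.
  intros Hf Heps; destruct (Hf eps Heps) as (d & Hd & near).
  exists d; split; [exact Hd|]; intros b Hb.
  destruct (Req_dec a b) as [<-|Hab].
  - rewrite Rminus_diag, Rabs_R0; exact Heps.
  - apply near; repeat split; assumption.
Qed.

Lemma le_of_nearby_le f g a b : continuity_pt f a -> continuity_pt g b ->
  (forall eta, 0 < eta -> exists a' b',
     Rabs (a' - a) < eta /\ Rabs (b' - b) < eta /\ f a' <= g b') ->
  f a <= g b.
Proof.
  intros Hf Hg nearby; apply Rle_plus_epsilon; intros e He.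
  destruct (continuity_pt_near f a (e / 2) Hf) as (d1 & Hd1 & near_f); [lra|].
  destruct (continuity_pt_near g b (e / 2) Hg) as (d2 & Hd2 & near_g); [lra|].
  destruct (nearby (Rmin d1 d2) (Rmin_pos _ _ Hd1 Hd2)) as (a' & b' & Ha' & Hb' & le').
  pose proof (Rmin_l d1 d2); pose proof (Rmin_r d1 d2).
  destruct (Rabs_def2 _ _ (near_f a' ltac:(lra))).
  destruct (Rabs_def2 _ _ (near_g b' ltac:(lra))).
  lra.
Qed.

Lemma IVT_level f a b h : (forall t, continuity_pt f t) ->
  a <= b -> (f a - h) * (f b - h) <= 0 -> exists z, a <= z <= b /\ f z = h.
Proof.
  intros Hf Hab Hsign.
  assert (Hfh : continuity (fun t => f t - h)).
  { intros t; apply continuity_pt_minus; [apply Hf | apply continuity_pt_const; now intros ? ?]. }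
  destruct (IVT_cor _ a b Hfh Hab Hsign) as (z & Hz & Hfz).
  exists z; split; [exact Hz | lra].
Qed.

(* Either [y] returns to the level [y u] inside [[a, b]], or some chord
   [(t1, t2)] with [t1] in [[u, a]] and [t2] in [[b, v]] is strictly shorter
   than [(u, v)]: the one of [y a], [y b] closer to [y u] is attained on the
   other side. *)
Lemma level_or_shorter_chord y u v a b : (forall t, continuity_pt y t) ->
  u < a -> a < b -> b < v -> y u = y v ->
  (exists w, a <= w <= b /\ y w = y u) \/
  (exists t1 t2, u <= t1 <= a /\ b <= t2 <= v /\ y t1 = y t2 /\ (t1 = a \/ t2 = b)).
Proof.
  intros Hy Hua Hab Hbv Huv.
  destruct (Rle_dec ((y a - y u) * (y b - y u)) 0) as [across|same_side].
  { left; apply IVT_level; auto; lra. }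
  right; destruct (Rle_dec ((y b - y a) * (y v - y a)) 0) as [a_between|a_outside].
  - destruct (IVT_level y b v (y a)) as (z & Hz & Hyz); auto; [lra|].
    exists a, z; repeat split; auto; lra.
  - apply Rnot_le_lt in same_side; apply Rnot_le_lt in a_outside; rewrite <- Huv in a_outside.
    destruct (IVT_level y u a (y b)) as (z & Hz & Hyz); auto; [lra | nra |].
    exists z, b; repeat split; auto; lra.
Qed.

Lemma mean_value f u v : (forall t, ex_derive f t) -> u < v ->
  exists c, u <= c <= v /\ f v - f u = Derive f c * (v - u).
Proof.
  intros Hf Huv; destruct (MVT_gen f u v (Derive f)) as (c & Hc & Hfc).
  - intros t _; apply Derive_correct, Hf.
  - intros t _; apply ex_derive_continuity_pt, Hf.
  - rewrite Rmin_left, Rmax_right in Hc by lra; exists c; auto.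
Qed.

Section ShortestNested.

Variable P : R -> R -> Prop.
Variable delta : R.
Hypothesis delta_pos : 0 < delta.
Hypothesis P_long : forall u v, P u v -> u + delta <= v.
Hypothesis P_closed : forall u v, u < v ->
  (forall eta, 0 < eta -> exists u' v', P u' v' /\ u - eta < u' <= u /\ v <= v' < v + eta) ->
  P u v.

Lemma near_shortest_nested u v eps : P u v -> 0 < eps ->
  exists u' v', P u' v' /\ u <= u' /\ v' <= v /\
    forall a b, P a b -> u <= a -> b <= v -> v' - u' < b - a + eps.
Proof.
  intros Puv Heps.
  pose (E := fun l => exists a b, P a b /\ u <= a /\ b <= v /\ l = a - b).
  (* [m] is minus the infimum of the lengths. *)
  destruct (completeness E) as (m & m_ub & m_lub).
  - exists 0; intros l (a & b & Pab & _ & _ & ->); apply P_long in Pab; lra.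
  - exists (u - v), u, v; repeat split; auto; lra.
  - destruct (classic (exists a b, P a b /\ u <= a /\ b <= v /\ m - eps < a - b))
      as [(a & b & Pab & Hua & Hbv & near)|far].
    + exists a, b; repeat split; auto; intros a' b' Pab' Hua' Hbv'.
      assert (E (a' - b')) as Ea' by (exists a', b'; auto).
      apply m_ub in Ea'; lra.
    + exfalso; enough (m <= m - eps) by lra.
      apply m_lub; intros l (a & b & Pab & Hua & Hbv & ->).
      apply Rnot_lt_le; intros Hlt; apply far; exists a, b; auto.
Qed.

(* Iterating [near_shortest_nested] with [eps = 1/(n+1)] gives nested
   intervals; their limit is in [P] by [P_closed] and is shortest. *)
Lemma exists_shortest_nested u0 v0 : P u0 v0 ->
  exists u v, P u v /\ u0 <= u /\ v <= v0 /\
    forall a b, P a b -> u <= a -> b <= v -> v - u <= b - a.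
Proof.
  intros P0.
  pose (shrink (n : nat) (p : R * R) := epsilon (inhabits p) (fun q =>
          P (fst q) (snd q) /\ fst p <= fst q /\ snd q <= snd p /\
          forall a b, P a b -> fst p <= a -> b <= snd p ->
            snd q - fst q < b - a + / INR (S n))).
  assert (shrink_spec : forall n p, P (fst p) (snd p) -> P (fst (shrink n p)) (snd (shrink n p)) /\
            fst p <= fst (shrink n p) /\ snd (shrink n p) <= snd p /\
            forall a b, P a b -> fst p <= a -> b <= snd p ->
              snd (shrink n p) - fst (shrink n p) < b - a + / INR (S n)).
  { intros n p Pp; apply epsilon_spec.
    destruct (near_shortest_nested (fst p) (snd p) (/ INR (S n)) Pp) as (u & v & Huv);
      [apply Rinv_0_lt_compat, lt_0_INR; auto with arith|].
    exists (u, v); exact Huv. }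
  pose (s := fix s n := match n with O => (u0, v0) | S k => shrink k (s k) end).
  pose (U n := fst (s n)); pose (V n := snd (s n)).
  assert (Ps : forall n, P (U n) (V n)) by (induction n; [exact P0 | apply shrink_spec, IHn]).
  assert (U_growing : Un_growing U) by (intros n; apply (shrink_spec n (s n) (Ps n))).
  assert (V_decreasing : Un_decreasing V) by (intros n; apply (shrink_spec n (s n) (Ps n))).
  assert (U_le_V : forall n m, U n <= V m).
  { intros n m; pose proof (P_long _ _ (Ps (max n m))).
    pose proof (Rge_le _ _ (growing_prop U (max n m) n U_growing ltac:(lia))).
    pose proof (decreasing_prop V m (max n m) V_decreasing ltac:(lia)); lra. }
  destruct (growing_cv U U_growing) as (us & Hus).
  { exists (V 0%nat); intros l (n & ->); apply U_le_V. }
  destruct (decreasing_cv V V_decreasing) as (vs & Hvs).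
  { exists (- U 0%nat); intros l (n & ->); unfold opp_seq; pose proof (U_le_V 0%nat n); lra. }
  pose proof (growing_ineq U us U_growing Hus) as U_le_us.
  pose proof (decreasing_ineq V vs V_decreasing Hvs) as vs_le_V.
  assert (close : forall eta, 0 < eta -> exists n, us - eta < U n /\ V n < vs + eta).
  { intros eta Heta; destruct (Hus eta Heta) as (N1 & HN1); destruct (Hvs eta Heta) as (N2 & HN2).
    exists (max N1 N2).
    destruct (Rabs_def2 _ _ (HN1 (max N1 N2) ltac:(lia))).
    destruct (Rabs_def2 _ _ (HN2 (max N1 N2) ltac:(lia))); lra. }
  assert (us_lt_vs : us + delta <= vs).
  { apply Rnot_lt_le; intros Hlt; destruct (close ((us + delta - vs) / 2)) as (n & Hn); [lra|].
    pose proof (P_long _ _ (Ps n)); lra. }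
  exists us, vs; repeat split.
  - apply P_closed; [lra|]; intros eta Heta; destruct (close eta Heta) as (n & Hn).
    exists (U n), (V n); pose proof (U_le_us n); pose proof (vs_le_V n); repeat split; auto; lra.
  - exact (U_le_us 0%nat).
  - exact (vs_le_V 0%nat).
  - intros a b Pab Hua Hbv; apply Rnot_lt_le; intros shorter.
    destruct (archimed_cor1 (vs - us - (b - a))) as ([|k] & Hk & Hk0); [lra | lia |].
    destruct (shrink_spec k (s k) (Ps k)) as (_ & _ & _ & near).
    specialize (near a b Pab ltac:(pose proof (U_le_us k); unfold U in *; lra)
                           ltac:(pose proof (vs_le_V k); unfold V in *; lra)).
    pose proof (U_le_us (S k)); pose proof (vs_le_V (S k)); unfold U, V in *; simpl in *; lra.
Qed.

End ShortestNested.

Section Chords.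

Variables (L : R) (x y : R -> R).
Hypothesis x_derivable : forall t, ex_derive x t.
Hypothesis Dx_continuous : forall t, continuity_pt (Derive x) t.
Hypothesis y_derivable : forall t, ex_derive y t.

Definition rightward_chord u v := 0 <= u /\ u < v /\ v <= L /\ y u = y v /\ x u <= x v.

Lemma rightward_chord_long :
  (forall s, 0 <= s <= L -> sqrt (Derive x s ^ 2 + Derive y s ^ 2) = 1) ->
  ~ (exists s, 0 <= s <= L /\ Derive x s = 1 /\ Derive y s = 0) ->
  exists delta, 0 < delta /\ forall u v, rightward_chord u v -> u + delta <= v.
Proof.
  intros unit_speed never_east.
  assert (west : forall c, 0 <= c <= L -> Derive y c = 0 -> Derive x c = -1).
  { intros c Hc Dyc; pose proof (unit_speed c Hc) as speed; rewrite Dyc in speed.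
    assert (Derive x c ^ 2 = 1) as sq.
    { rewrite <- sqrt_1 in speed; apply sqrt_inj in speed; nra. }
    destruct (Rtotal_order (Derive x c) 0) as [neg|[zero|pos]]; [nra | nra |].
    exfalso; apply never_east; exists c; repeat split; auto; nra. }
  destruct (Heine_cor2 (f := Derive x) (a := 0) (b := L) (fun t _ => Dx_continuous t)
              (mkposreal 1 Rlt_0_1)) as (d & unif).
  exists d; split; [apply cond_pos|]; intros u v (Hu & Huv & Hv & Hyuv & Hxuv).
  apply Rnot_lt_le; intros short.
  destruct (mean_value y u v y_derivable Huv) as (c & Hc & Hyc).
  assert (Derive y c = 0) as Dyc.
  { rewrite Hyuv in Hyc; destruct (Rmult_integral (Derive y c) (v - u)); [lra | auto | lra]. }
  destruct (mean_value x u v x_derivable Huv) as (e & He & Hxe).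
  assert (Rabs (Derive x e - Derive x c) < 1) as near
    by (apply unif; [lra | lra | apply Rabs_def1; lra]).
  apply Rabs_def2 in near; rewrite (west c ltac:(lra) Dyc) in near; nra.
Qed.

Let x_continuous t := ex_derive_continuity_pt x t (x_derivable t).
Let y_continuous t := ex_derive_continuity_pt y t (y_derivable t).

Lemma rightward_chord_closed u v : u < v ->
  (forall eta, 0 < eta -> exists u' v',
     rightward_chord u' v' /\ u - eta < u' <= u /\ v <= v' < v + eta) ->
  rightward_chord u v.
Proof.
  intros Huv approx.
  assert (nearby : forall eta, 0 < eta -> exists u' v', rightward_chord u' v' /\
            Rabs (u' - u) < eta /\ Rabs (v' - v) < eta).
  { intros eta Heta; destruct (approx eta Heta) as (u' & v' & chord & Hu' & Hv').
    exists u', v'; split; [exact chord | split; apply Rabs_def1; lra]. }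
  destruct (approx 1 Rlt_0_1) as (u1 & v1 & (Hu1 & _ & Hv1 & _) & Hu & Hv).
  repeat split; try lra.
  - apply Rle_antisym; apply le_of_nearby_le; auto; intros eta Heta;
      destruct (nearby eta Heta) as (u' & v' & (_ & _ & _ & Hy' & _) & Hu' & Hv').
    + exists u', v'; repeat split; auto; lra.
    + exists v', u'; repeat split; auto; lra.
  - apply le_of_nearby_le; auto; intros eta Heta;
      destruct (nearby eta Heta) as (u' & v' & (_ & _ & _ & _ & Hx') & Hu' & Hv').
    exists u', v'; auto.
Qed.

Lemma shortest_rightward_chord_degenerate u v : rightward_chord u v ->
  (forall a b, rightward_chord a b -> u <= a -> b <= v -> v - u <= b - a) ->
  x u = x v.
Proof.
  intros (Hu & Huv & Hv & Hyuv & Hxuv) shortest.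
  assert (west : forall t1 t2, u <= t1 -> t1 < t2 -> t2 <= v -> t2 - t1 < v - u ->
            y t1 = y t2 -> x t2 < x t1).
  { intros t1 t2 H1 H12 H2 shorter Hy; apply Rnot_le_lt; intros Hx.
    enough (v - u <= t2 - t1) by lra.
    apply shortest; repeat split; auto; lra. }
  apply Rle_antisym; [exact Hxuv|].
  apply le_of_nearby_le; auto; intros eta Heta.
  pose (eps := Rmin (eta / 2) ((v - u) / 3)).
  assert (0 < eps /\ eps <= eta / 2 /\ eps <= (v - u) / 3) as (He & He1 & He2).
  { split; [apply Rmin_pos; lra | split; [apply Rmin_l | apply Rmin_r]]. }
  destruct (level_or_shorter_chord y u v (u + eps) (v - eps))
    as [(w & Hw & Hyw)|(t1 & t2 & Ht1 & Ht2 & Hy12 & Hend)]; auto; try lra.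
  - exists v, u; repeat split; [rewrite Rminus_diag, Rabs_R0; lra | rewrite Rminus_diag, Rabs_R0; lra |].
    pose proof (west u w ltac:(lra) ltac:(lra) ltac:(lra) ltac:(lra) ltac:(auto)).
    pose proof (west w v ltac:(lra) ltac:(lra) ltac:(lra) ltac:(lra) ltac:(congruence)).
    lra.
  - exists t2, t1; repeat split; try (apply Rabs_def1; lra).
    apply Rlt_le, west; auto; try lra; destruct Hend; lra.
Qed.

End Chords.

Theorem lemma1 (L : R) (x y : R -> R)
  (HL : 1 < L)
  (Hx : smooth x) (Hy : smooth y)
  (Harc : forall s, 0 <= s <= L ->
            sqrt (Derive x s ^ 2 + Derive y s ^ 2) = 1)
  (H0 : x 0 = 0 /\ y 0 = 0)
  (HLend : x L = 1 /\ y L = 0)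
  (Hnotan : ~ (exists s, 0 <= s <= L /\ Derive x s = 1 /\ Derive y s = 0)) :
  exists s1 s2, 0 <= s1 <= L /\ 0 <= s2 <= L /\ s1 <> s2 /\
                x s1 = x s2 /\ y s1 = y s2.
Proof.
  pose proof (smooth_ex_derive x Hx) as x_derivable.
  pose proof (smooth_ex_derive y Hy) as y_derivable.
  pose proof (smooth_Derive_continuity_pt x Hx) as Dx_continuous.
  destruct (rightward_chord_long L x y x_derivable Dx_continuous y_derivable Harc Hnotan)
    as (delta & delta_pos & long).
  destruct (exists_shortest_nested (rightward_chord L x y) delta delta_pos long
              (rightward_chord_closed L x y x_derivable y_derivable) 0 L)
    as (u & v & chord & _ & _ & shortest).
  { repeat split; lra. }
  exists u, v.
  pose proof (shortest_rightward_chord_degenerate L x y x_derivable y_derivable u v chord shortest).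
  destruct chord as (Hu & Huv & Hv & Hyuv & _); repeat split; auto; lra.
Qed.
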